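(* Let $G=(L\cup R,E)$ be a Tanner graph without parallel edges and with no node of degree less than 2. (i) Suppose $G$ is left-regular with left degree $d_l\ge 2$, and let $\mathcal{S}\subset L$ be a nonempty $(a,b)$ trapping set whose induced subgraph $G(\mathcal{S})$ is connected and contains no cycle. Then $b\ge a(d_l-2)+2$, with equality if $\mathcal{S}$ is elementary. (ii) The set of variable nodes of any shortest cycle (of length equal to the girth $g$) of $G$ is an elementary trapping set. (iii) For every $\mathcal{S}\in\mathcal{T}$, the induced subgraph $G(\mathcal{S})$ contains at least one cycle. (iv) If $G$ is left-regular with left degree at least 2 and $\mathcal{S}\subset L$ is a nonempty absorbing set, then $G(\mathcal{S})$ contains at least one cycle. (v) If $G$ is left-regular with left degree $l\ge 3$ and $\mathcal{S}\subset L$ is a nonempty ZP trapping set, then $G(\mathcal{S})$ contains at least one cycle.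
   Context: A Tanner graph is a bipartite graph $G=(L\cup R,E)$ with variable nodes $L$ and check nodes $R$; it is left-regular with left degree $d_l$ if every variable node has degree $d_l$. For $\mathcal{S}\subset L$, $\Gamma(\mathcal{S})$ is the set of neighbors of $\mathcal{S}$ in $R$, and the induced subgraph $G(\mathcal{S})$ has node set $\mathcal{S}\cup\Gamma(\mathcal{S})$ and all edges of $G$ between $\mathcal{S}$ and $\Gamma(\mathcal{S})$. $\Gamma_{\mathrm{o}}(\mathcal{S})$ and $\Gamma_{\mathrm{e}}(\mathcal{S})$ are the check nodes of $\Gamma(\mathcal{S})$ with odd, respectively even, degree in $G(\mathcal{S})$. $\mathcal{S}$ is an $(a,b)$ trapping set if $|\mathcal{S}|=a$ and $|\Gamma_{\mathrm{o}}(\mathcal{S})|=b$ (any subset of $L$ is a trapping set for some $(a,b)$); it is elementary if every check node of $G(\mathcal{S})$ has degree one or two in $G(\mathcal{S})$. $\mathcal{S}$ is an absorbing set if every node of $\mathcal{S}$ has strictly more neighbors in $\Gamma_{\mathrm{e}}(\mathcal{S})$ than in $\Gamma_{\mathrm{o}}(\mathcal{S})$. For $G$ left-regular with left degree $l$, $\mathcal{S}$ is a ZP (Zyablov–Pinsker) trapping set if every node of $\mathcal{S}$ is adjacent to fewer than $l-\lfloor (l-1)/2\rfloor$ nodes of $\Gamma_{\mathrm{o}}(\mathcal{S})$. $\mathcal{T}$ denotes the set of all trapping sets $\mathcal{S}\subset L$ such that $G(\mathcal{S})$ is connected and every node of $\mathcal{S}$ is adjacent to at least two nodes of $\Gamma_{\mathrm{e}}(\mathcal{S})$.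 *)

(* A Tanner graph is a finite bipartite graph given by
   variable nodes L, check nodes R and an adjacency relation adj : L -> R -> bool
   (a relation, so there are no parallel edges). *)
From mathcomp Require Import all_boot.
Set Implicit Arguments. Unset Strict Implicit. Unset Printing Implicit Defensive.

Section Tanner.
Variables (L R : finType) (adj : L -> R -> bool).

Definition tedge : rel (L + R) := fun x y =>
  match x, y with
  | inl v, inr r => adj v r
  | inr r, inl v => adj v r
  | _, _ => false
  end.

Definition ldeg (v : L) : nat := #|[set r | adj v r]|.
Definition rdeg (r : R) : nat := #|[set v | adj v r]|.

Definition min_deg2 : Prop :=
  (forall v, 2 <= ldeg v) /\ (forall r, 2 <= rdeg r).

Definition left_regular (dl : nat) : Prop := forall v, ldeg v = dl.

Definition Gamma (S : {set L}) : {set R} := [set r | [exists v in S, adj v r]].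

Definition deg_in (S : {set L}) (r : R) : nat := #|[set v in S | adj v r]|.

Definition Gamma_o (S : {set L}) : {set R} := [set r in Gamma S | odd (deg_in S r)].
Definition Gamma_e (S : {set L}) : {set R} := [set r in Gamma S | ~~ odd (deg_in S r)].

Definition Gnodes (S : {set L}) : pred (L + R) := fun x =>
  match x with inl v => v \in S | inr r => r \in Gamma S end.

Definition induced_edge (S : {set L}) : rel (L + R) := fun x y =>
  [&& Gnodes S x, Gnodes S y & tedge x y].

Definition induced_connected (S : {set L}) : Prop :=
  forall x y, Gnodes S x -> Gnodes S y -> connect (induced_edge S) x y.

Definition is_cycle (T : eqType) (e : rel T) (p : seq T) : Prop :=
  [/\ 3 <= size p, uniq p & cycle e p].

Definition has_cycle (T : eqType) (e : rel T) : Prop := exists p, is_cycle e p.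

Definition trapping_set (S : {set L}) (a b : nat) : Prop :=
  #|S| = a /\ #|Gamma_o S| = b.

Definition elementary (S : {set L}) : Prop :=
  forall r, r \in Gamma S -> 1 <= deg_in S r <= 2.

Definition nbrs_in (v : L) (C : {set R}) : nat := #|[set r in C | adj v r]|.

Definition absorbing (S : {set L}) : Prop :=
  forall v, v \in S -> nbrs_in v (Gamma_o S) < nbrs_in v (Gamma_e S).

Definition ZP_trapping (l : nat) (S : {set L}) : Prop :=
  forall v, v \in S -> nbrs_in v (Gamma_o S) < l - (l.-1)./2.

Definition in_T (S : {set L}) : Prop :=
  induced_connected S /\ (forall v, v \in S -> 2 <= nbrs_in v (Gamma_e S)).

Definition var_nodes (p : seq (L + R)) : {set L} := [set v | inl v \in p].

End Tanner.

(* Parts (iii)-(v) rest on one fact: if every variable node of S has at least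
   two neighbours in Gamma_e(S), then S and Gamma_e(S) span a subgraph of
   minimum degree two (an even check node of G(S) has degree at least two),
   and such a subgraph contains a cycle.  For absorbing and ZP trapping sets the
   hypothesis follows by splitting the degree of a variable node into its odd
   and even neighbours.
   For (ii), a check node with three variable neighbours on a shortest cycle
   would give a shorter cycle: through a chord if the check node lies on the
   cycle, through a detour across the shortest of the three arcs otherwise.
   For (i), count the edges of the tree G(S): there are a * dl of them from the
   variable side, at least b + 2 |Gamma_e(S)| from the check side (with equality
   when S is elementary), and a + b + |Gamma_e(S)| - 1 because G(S) is a tree. *)

From mathcomp Require Import all_boot zify.
Set Implicit Arguments. Unset Strict Implicit. Unset Printing Implicit Defensive.

Lemma has_cycle_subrel (T : eqType) (e e' : rel T) :
  subrel e e' -> has_cycle e -> has_cycle e'.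
Proof. by move=> ee' [p [Hs Hu Hc]]; exists p; split=> //; apply: sub_cycle Hc. Qed.

Lemma card_sep_sum (T : finType) (A : {set T}) (P : pred T) :
  #|[set y in A | P y]| = \sum_(y in A) P y.
Proof.
rewrite -sum1_card big_mkcond [RHS]big_mkcond; apply: eq_bigr => y _.
by rewrite inE; case: (y \in A); case: (P y).
Qed.

Section SubGraph.
Variables (T : finType) (e : rel T).
Hypotheses (esym : symmetric e) (eirr : irreflexive e).

Definition sub_rel (V : {set T}) : rel T := fun x y => [&& x \in V, y \in V & e x y].
Definition sub_deg (V : {set T}) (x : T) : nat := #|[set y in V | e x y]|.

Lemma sub_relS (V W : {set T}) : V \subset W -> subrel (sub_rel V) (sub_rel W).
Proof.
by move=> /subsetP VW x y /and3P [xV yV exy]; rewrite /sub_rel !VW.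
Qed.

(* Grow a uniq path whose last vertex [x] always has a neighbour other than the
   previous one; it must close up before exhausting the finite type. *)
Lemma sub_rel_has_cycle (V : {set T}) :
  V != set0 -> {in V, forall x, 1 < sub_deg V x} -> has_cycle (sub_rel V).
Proof.
case/set0Pn=> x0 x0V Vdeg.
suff grow n x p : #|T| - size p <= n -> uniq (x :: p) -> path (sub_rel V) x p ->
    x \in V -> has_cycle (sub_rel V).
  by apply: (grow #|T| x0 [::]); rewrite ?subn0.
elim: n x p => [|n IHn] x p Hn Hu Hp xV.
  by exfalso; have := max_card (mem (x :: p)); rewrite (card_uniqP Hu); move: Hn => /=; lia.
have [y [y' [/[!inE] /andP [yV exy] /andP [y'V exy'] yy']]] := card_gt1P (Vdeg x xV).
have [z [zV exz znp]] : exists z, [/\ z \in V, e x z & z != head x p].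
  case: (eqVneq y (head x p)) => [Ey|]; last by exists y.
  by exists y'; rewrite -Ey eq_sym.
have exz' : sub_rel V z x by rewrite /sub_rel zV xV esym.
have [zxp|zxp] := boolP (z \in x :: p); last first.
  apply: (IHn z (x :: p)) => /=; rewrite ?zxp ?Hu ?Hp ?exz' //.
  by rewrite /= subnS -subn1 leq_subLR add1n.
move: zxp; rewrite in_cons => /predU1P [zx|zp]; first by rewrite zx eirr in exz.
case/splitPr: zp Hu Hp znp => [[|a p1] p2 Hu Hp znp]; first by rewrite eqxx in znp.
exists (x :: rcons (a :: p1) z); split; first by rewrite /= size_rcons.
  by move: Hu; rewrite -cat_rcons -cat_cons cat_uniq => /and3P [].
rewrite /cycle rcons_path last_rcons exz' andbT.
by move: Hp; rewrite -cat_rcons cat_path => /andP [].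
Qed.

Lemma sub_deg_setD1 (V : {set T}) x u : x \in V ->
  sub_deg V u = e u x + sub_deg (V :\ x) u.
Proof.
move=> xV; rewrite /sub_deg (cardsD1 x [set y in V | e u y]) !inE xV /=.
by congr (_ + _); apply: eq_card => y; rewrite !inE andbA.
Qed.

Lemma sum_sub_deg_setD1 (V : {set T}) x : x \in V ->
  \sum_(u in V :\ x) e u x = sub_deg V x.
Proof.
move=> xV; rewrite /sub_deg card_sep_sum (big_setD1 x xV) /= eirr add0n.
by apply: eq_bigr => u _; rewrite esym.
Qed.

Lemma sub_deg_gt0 (V : {set T}) x y :
  {in V &, forall u v, connect (sub_rel V) u v} -> x \in V -> y \in V -> x != y ->
  0 < sub_deg V x.
Proof.
move=> Vcon xV yV; case/connectP: (Vcon x y xV yV) => [[|z p]] /=.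
  by move=> _ ->; rewrite eqxx.
case/andP=> /and3P [_ zV exz] _ _ _.
by rewrite card_gt0; apply/set0Pn; exists z; rewrite inE zV exz.
Qed.

Lemma sub_rel_path_in (V : {set T}) a p : path (sub_rel V) a p -> all [in V] p.
Proof. by elim: p a => //= b p IHp a /andP [/and3P [_ -> _] /IHp]. Qed.

(* A vertex of degree at most one is never an inner vertex of a uniq path. *)
Lemma connect_sub_rel_setD1 (V : {set T}) x : x \in V -> sub_deg V x <= 1 ->
  {in V &, forall u v, connect (sub_rel V) u v} ->
  {in V :\ x &, forall u v, connect (sub_rel (V :\ x)) u v}.
Proof.
move=> xV xleaf Vcon a b /setD1P [ax aV] /setD1P [bx bV].
case/connectP: (Vcon a b aV bV) => p0 /shortenP [p Hp Hu _] {p0} Eb.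
have pV : all [in V] (a :: p) by rewrite /= aV (sub_rel_path_in Hp).
have xnp : x \notin a :: p.
  rewrite in_cons negb_or eq_sym ax /=; apply/negP => xp.
  case/splitPr: xp Hp Hu Eb pV => p1 [|c p2] Hp Hu Eb pV.
    by move: bx; rewrite Eb last_cat eqxx.
  move: Hp; rewrite cat_path /= => /and4P [_ /and3P [uV _ eux] /and3P [_ cV exc] _].
  have uc : last a p1 != c.
    apply: contraTneq Hu => <-; rewrite -cat_cons cat_uniq /=.
    by rewrite mem_last !orbT andbF.
  have : [set last a p1; c] \subset [set y in V | e x y].
    apply/subsetP => y; rewrite !inE => /pred2P [->|->]; last by rewrite cV exc.
    by rewrite uV esym eux.
  by move/subset_leq_card; rewrite cards2 uc leqNgt (leq_ltn_trans xleaf).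
apply/connectP; exists p; last by [].
apply: (@sub_in_path _ [in V :\ x] _ _ _ a p _ Hp).
  by move=> u v /[!inE] uVx vVx /and3P [_ _ euv]; rewrite /sub_rel !inE uVx vVx.
apply/allP=> u up; rewrite !inE (allP pV u up) andbT.
by apply: contraNneq xnp => <-.
Qed.

Lemma acyclic_has_leaf (V : {set T}) : V != set0 -> ~ has_cycle (sub_rel V) ->
  exists2 x, x \in V & sub_deg V x <= 1.
Proof.
move=> V0 Vacyc; apply/exists_inP; apply: contraT => /exists_inPn Vdeg.
by case: Vacyc; apply: sub_rel_has_cycle => // x /Vdeg; rewrite -ltnNge.
Qed.

Lemma tree_sum_sub_deg (V : {set T}) :
  {in V &, forall x y, connect (sub_rel V) x y} -> ~ has_cycle (sub_rel V) ->
  \sum_(x in V) sub_deg V x = (#|V|.-1).*2.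
Proof.
move Vn : #|V| => n; elim: n V Vn => [|n IHn] V Vn Vcon Vacyc.
  by move/eqP: Vn; rewrite cards_eq0 => /eqP ->; rewrite big_set0.
have V0 : V != set0 by rewrite -card_gt0 Vn.
have [x xV xleaf] := acyclic_has_leaf V0 Vacyc.
case: n => [|n] in IHn Vn *.
  move/eqP/cards1P: Vn => [y ->]; rewrite big_set1 /sub_deg eq_card0 // => z.
  by rewrite !inE; case: eqP => // ->; rewrite eirr.
have [y yV yx] : exists2 y, y \in V & y != x.
  have /card_gt1P [u [v [uV vV uv]]] : 1 < #|V| by rewrite Vn.
  by case: (eqVneq u x) => [ux|]; [exists v; rewrite // -ux eq_sym | exists u].
have xdeg : sub_deg V x = 1.
  by apply/eqP; rewrite eqn_leq xleaf (sub_deg_gt0 Vcon xV yV) // eq_sym.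
have Vxn : #|V :\ x| = n.+1 by move: Vn; rewrite (cardsD1 x V) xV => -[].
rewrite (big_setD1 x xV) (eq_bigr _ (fun u _ => sub_deg_setD1 u xV)) big_split /=.
rewrite sum_sub_deg_setD1 // xdeg IHn ?Vxn //.
  exact: connect_sub_rel_setD1.
by move/(has_cycle_subrel (sub_relS (subsetDl V [set x]))).
Qed.
End SubGraph.

Section ShorterCycle.
Variables (T : eqType) (e : rel T).
Hypotheses (esym : symmetric e) (eirr : irreflexive e).

Lemma cycle_path_prefix x s1 y s2 :
  cycle e (x :: s1 ++ y :: s2) -> path e x (rcons s1 y).
Proof. by rewrite /= rcons_cat -cat_rcons cat_path => /andP []. Qed.

Lemma uniq_prefix (x y : T) s1 s2 : uniq (x :: s1 ++ y :: s2) -> uniq (x :: rcons s1 y).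
Proof. by rewrite -cat_rcons -cat_cons cat_uniq => /andP []. Qed.

Lemma cycle_through_outer w u1 u2 A B :
  uniq (u1 :: A ++ u2 :: B) -> cycle e (u1 :: A ++ u2 :: B) ->
  w \notin u1 :: A ++ u2 :: B -> e w u1 -> e w u2 ->
  is_cycle e (w :: u1 :: rcons A u2).
Proof.
move=> Hu Hc Hw ewu1 ewu2; split.
- by rewrite /= size_rcons.
- rewrite cons_uniq (uniq_prefix Hu) andbT; apply: contra Hw.
  by rewrite -cat_rcons -cat_cons mem_cat => ->.
- rewrite /= ewu1 rcons_path last_rcons esym ewu2 andbT.
  exact: cycle_path_prefix Hc.
Qed.

Lemma cycle_through_chord w u A B :
  uniq (w :: A ++ u :: B) -> cycle e (w :: A ++ u :: B) -> e w u -> A != [::] ->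
  is_cycle e (w :: rcons A u).
Proof.
move=> Hu Hc ewu A0; split.
- by case: A A0 {Hu Hc} => //= a A _; rewrite size_rcons.
- exact: uniq_prefix Hu.
- rewrite /= rcons_path last_rcons esym ewu andbT.
  exact: cycle_path_prefix Hc.
Qed.

(* Of the two arcs u1..u2 and u2..u3, a detour through [w] shortens at least one,
   because the arc u1..u2 has an inner vertex. *)
Lemma shorter_cycle_outer_split w u1 u2 u3 A B C :
  uniq (u1 :: A ++ u2 :: B ++ u3 :: C) -> cycle e (u1 :: A ++ u2 :: B ++ u3 :: C) ->
  w \notin u1 :: A ++ u2 :: B ++ u3 :: C -> e w u1 -> e w u2 -> e w u3 -> A != [::] ->
  exists2 q, is_cycle e q & size q < size (u1 :: A ++ u2 :: B ++ u3 :: C).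
Proof.
set p := u1 :: _ => Hu Hc Hw ewu1 ewu2 ewu3 A0.
have sz_p : size p = size A + size B + size C + 3.
  by rewrite /p /= size_cat /= size_cat /=; lia.
have [BC0|] := posnP (size B + size C); last first.
  exists (w :: u1 :: rcons A u2); first exact: cycle_through_outer Hu Hc Hw ewu1 ewu2.
  by rewrite sz_p /= size_rcons; lia.
have Hrot : rot (size (u1 :: A)) p = u2 :: B ++ u3 :: (C ++ u1 :: A).
  by rewrite /p -cat_cons rot_size_cat /= -catA.
exists (w :: u2 :: rcons B u3).
  apply: (cycle_through_outer (B := C ++ u1 :: A)) ewu2 ewu3;
  by rewrite -Hrot ?rot_uniq ?rot_cycle ?mem_rot.
by rewrite sz_p /= size_rcons; case: A A0 {Hu Hc Hw p sz_p Hrot} => //= a A _; lia.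
Qed.

Lemma shorter_cycle_outer p w u1 u2 u3 :
  uniq p -> cycle e p -> w \notin p -> u1 \in p -> u2 \in p -> u3 \in p ->
  u1 != u2 -> u1 != u3 -> u2 != u3 -> e w u1 -> e w u2 -> e w u3 ->
  ~~ e u1 u2 -> ~~ e u1 u3 -> exists2 q, is_cycle e q & size q < size p.
Proof.
move=> Hu Hc Hw u1p u2p u3p u12 u13 u23 ewu1 ewu2 ewu3 nu12 nu13.
case: (rot_to u1p) => i p' Hrot.
rewrite -(size_rot i) Hrot.
have {}Hu : uniq (u1 :: p') by rewrite -Hrot rot_uniq.
have {}Hc : cycle e (u1 :: p') by rewrite -Hrot rot_cycle.
have {}Hw : w \notin u1 :: p' by rewrite -Hrot mem_rot.
have inp' u : u \in p -> u1 != u -> u \in p'.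
  by rewrite -(mem_rot i) Hrot in_cons eq_sym => /predU1P [->|]; rewrite ?eqxx.
have A0 u A s : cycle e (u1 :: A ++ u :: s) -> ~~ e u1 u -> A != [::].
  by case: A => //= /andP [->].
case/splitPr: (inp' u2 u2p u12) (inp' u3 u3p u13) Hu Hc Hw => A D.
rewrite mem_cat in_cons eq_sym (negbTE u23) /= => /orP [] /splitPr [B C] Hu Hc Hw.
  rewrite -catA cat_cons in Hu Hc Hw *.
  exact: shorter_cycle_outer_split Hu Hc Hw ewu1 ewu3 ewu2 (A0 _ _ _ Hc nu13).
exact: shorter_cycle_outer_split Hu Hc Hw ewu1 ewu2 ewu3 (A0 _ _ _ Hc nu12).
Qed.

(* Only two of the three neighbours of [w] can be its neighbours along the cycle;
   the third one gives a chord. *)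
Lemma shorter_cycle_chord p w u1 u2 u3 :
  uniq p -> cycle e p -> w \in p -> u1 \in p -> u2 \in p -> u3 \in p ->
  u1 != u2 -> u1 != u3 -> u2 != u3 -> e w u1 -> e w u2 -> e w u3 ->
  exists2 q, is_cycle e q & size q < size p.
Proof.
move=> Hu Hc wp u1p u2p u3p u12 u13 u23 ewu1 ewu2 ewu3.
case: (rot_to wp) => i p' Hrot.
rewrite -(size_rot i) Hrot.
have {}Hu : uniq (w :: p') by rewrite -Hrot rot_uniq.
have {}Hc : cycle e (w :: p') by rewrite -Hrot rot_cycle.
have [u u123 unb] : exists2 u, u \in [:: u1; u2; u3] & u \notin [:: head w p'; last w p'].
  apply/hasP; apply: contraT => /hasPn nb.
  have u123 : uniq [:: u1; u2; u3] by rewrite /= !inE negb_or u12 u13 u23.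
  have := uniq_leq_size u123 (fun v vin => negbNE (nb v vin)).
  by rewrite ltn_geF.
have [up' ewu] : u \in p' /\ e w u.
  suff [up ewu] : u \in p /\ e w u.
    by move: up; rewrite -(mem_rot i) Hrot in_cons => /predU1P [uw|]; rewrite ?uw ?eirr in ewu.
  by move: u123; rewrite !inE => /or3P [] /eqP ->.
move: unb; rewrite !inE negb_or => /andP [uh ul].
case/splitPr: up' Hu Hc uh ul => A B Hu Hc uh ul.
exists (w :: rcons A u).
  by apply: cycle_through_chord Hu Hc ewu _; apply: contraNneq uh => ->.
case: B ul uh {Hu Hc} => [|b B] ul _; first by rewrite last_cat eqxx in ul.
by rewrite /= size_rcons size_cat /= !addnS !ltnS leq_addr.
Qed.

Lemma shorter_cycle_three_nbrs p w u1 u2 u3 :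
  uniq p -> cycle e p -> u1 \in p -> u2 \in p -> u3 \in p ->
  u1 != u2 -> u1 != u3 -> u2 != u3 -> e w u1 -> e w u2 -> e w u3 ->
  ~~ e u1 u2 -> ~~ e u1 u3 -> exists2 q, is_cycle e q & size q < size p.
Proof.
move=> Hu Hc u1p u2p u3p u12 u13 u23 ewu1 ewu2 ewu3 nu12 nu13.
have [wp|wp] := boolP (w \in p).
  exact: shorter_cycle_chord Hu Hc wp u1p u2p u3p u12 u13 u23 ewu1 ewu2 ewu3.
exact: shorter_cycle_outer Hu Hc wp u1p u2p u3p u12 u13 u23 ewu1 ewu2 ewu3 nu12 nu13.
Qed.
End ShorterCycle.

Section Tanner.
Variables (L R : finType) (adj : L -> R -> bool).
Implicit Type S : {set L}.

Lemma tedge_sym : symmetric (tedge adj).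
Proof. by case=> [v|r] [v'|r']. Qed.

Lemma tedge_irr : irreflexive (tedge adj).
Proof. by case. Qed.

Lemma Gamma_adj S v r : v \in S -> adj v r -> r \in Gamma adj S.
Proof. by move=> vS vr; rewrite inE; apply/existsP; exists v; rewrite vS vr. Qed.

Lemma deg_in_gt0 S r : r \in Gamma adj S -> 0 < deg_in adj S r.
Proof.
rewrite inE => /existsP [v /andP [vS vr]].
by rewrite card_gt0; apply/set0Pn; exists v; rewrite inE vS vr.
Qed.

Lemma Gamma_o_sub S r : r \in Gamma_o adj S -> r \in Gamma adj S.
Proof. by rewrite inE => /andP []. Qed.

Lemma Gamma_e_sub S r : r \in Gamma_e adj S -> r \in Gamma adj S.
Proof. by rewrite inE => /andP []. Qed.

Lemma deg_in_Gamma_e S r : r \in Gamma_e adj S -> 1 < deg_in adj S r.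
Proof.
rewrite inE => /andP [rG]; have := deg_in_gt0 rG.
by case: (deg_in adj S r) => [|[|d]].
Qed.

Lemma sum_Gamma_oe S (F : R -> nat) :
  \sum_(r in Gamma adj S) F r =
  \sum_(r in Gamma_o adj S) F r + \sum_(r in Gamma_e adj S) F r.
Proof.
rewrite (bigID (fun r => odd (deg_in adj S r))) /=.
by congr (_ + _); apply: eq_bigl => r; rewrite [RHS]inE.
Qed.

Lemma ldeg_nbrs_Gamma S v : v \in S -> ldeg adj v = nbrs_in adj v (Gamma adj S).
Proof.
move=> vS; apply: eq_card => r; rewrite [LHS]inE [RHS]inE.
by case: (boolP (adj v r)) => vr; rewrite ?andbF // (Gamma_adj vS vr).
Qed.

Lemma ldeg_oe S v : v \in S ->
  ldeg adj v = nbrs_in adj v (Gamma_o adj S) + nbrs_in adj v (Gamma_e adj S).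
Proof. by move=> vS; rewrite (ldeg_nbrs_Gamma vS) /nbrs_in !card_sep_sum sum_Gamma_oe. Qed.

Lemma shortest_cycle_elementary p : is_cycle (tedge adj) p ->
  (forall q, is_cycle (tedge adj) q -> size p <= size q) ->
  elementary adj (var_nodes p).
Proof.
move=> [_ Hu Hc] pmin r rG; rewrite deg_in_gt0 //= leqNgt.
apply/negP => /card_gt2P [v1 [v2 [v3 [[]]]]].
rewrite !inE => /andP [v1p v1r] /andP [v2p v2r] /andP [v3p v3r] [v12 v23 v31].
have v13 : inl v1 != inl v3 :> L + R by rewrite eq_sym.
have [q qcyc] := shorter_cycle_three_nbrs tedge_sym tedge_irr (w := inr r) Hu Hc v1p v2p v3p
  (v12 : inl v1 != inl v2 :> L + R) v13 v23 v1r v2r v3r isT isT.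
by rewrite ltnNge pmin.
Qed.

(* The variable nodes of [S] together with their even check nodes span a
   subgraph of minimum degree two. *)
Lemma even_nbrs_has_cycle S : S != set0 ->
  {in S, forall v, 1 < nbrs_in adj v (Gamma_e adj S)} ->
  has_cycle (induced_edge adj S).
Proof.
move=> /set0Pn [v0 v0S] Sdeg.
pose V : {set L + R} :=
  [set x | if x is inl v then v \in S else if x is inr r then r \in Gamma_e adj S else false].
have inVl v : (inl v \in V) = (v \in S) by rewrite inE.
have inVr r : (inr r \in V) = (r \in Gamma_e adj S) by rewrite inE.
clearbody V.
apply: (has_cycle_subrel (e := sub_rel (tedge adj) V)).
  have VG x : x \in V -> Gnodes adj S x.
    by case: x => [v|r]; rewrite ?inVl ?inVr //= => /Gamma_e_sub.
  by move=> x y /and3P [/VG xG /VG yG exy]; apply/and3P.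
apply: (sub_rel_has_cycle tedge_sym tedge_irr).
  by apply/set0Pn; exists (inl v0); rewrite inVl.
move=> [v|r]; rewrite ?inVl ?inVr => xV.
  have /card_gt1P [r1 [r2 [/[!inE] /andP [r1e vr1] /andP [r2e vr2] r12]]] := Sdeg v xV.
  by apply/card_gt1P; exists (inr r1), (inr r2); rewrite !(inE, inVr) /= r1e r2e vr1 vr2.
have /card_gt1P [v1 [v2 [/[!inE] /andP [v1S v1r] /andP [v2S v2r] v12]]] := deg_in_Gamma_e xV.
by apply/card_gt1P; exists (inl v1), (inl v2); rewrite !(inE, inVl) /= v1S v2S v1r v2r.
Qed.

Lemma absorbing_has_cycle S : S != set0 -> {in S, forall v, 1 < ldeg adj v} ->
  absorbing adj S -> has_cycle (induced_edge adj S).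
Proof.
move=> S0 Sdeg Sabs; apply: even_nbrs_has_cycle => // v vS.
by have := Sdeg v vS; have := Sabs v vS; rewrite (ldeg_oe vS); lia.
Qed.

Lemma ZP_trapping_has_cycle l S : left_regular adj l -> 2 < l -> S != set0 ->
  ZP_trapping adj l S -> has_cycle (induced_edge adj S).
Proof.
move=> reg l3 S0 SZP; apply: even_nbrs_has_cycle => // v vS.
have := SZP v vS; have := reg v; rewrite (ldeg_oe vS).
have : 0 < l.-1./2 by case: l l3 {reg SZP} => [|[|[|l]]].
move: l.-1./2 => h; lia.
Qed.

Lemma sum_deg_in_Gamma S :
  \sum_(r in Gamma adj S) deg_in adj S r = \sum_(v in S) ldeg adj v.
Proof.
rewrite (eq_bigr _ (fun r _ => card_sep_sum S (adj^~ r))) exchange_big /=.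
by apply: eq_bigr => v vS; rewrite (ldeg_nbrs_Gamma vS) /nbrs_in card_sep_sum.
Qed.

Lemma sum_deg_in_ge S :
  #|Gamma_o adj S| + (#|Gamma_e adj S|).*2 <= \sum_(r in Gamma adj S) deg_in adj S r.
Proof.
rewrite sum_Gamma_oe -sum1_card -muln2 -sum_nat_const.
apply: leq_add; apply: leq_sum => r.
  by move/Gamma_o_sub/deg_in_gt0.
exact: deg_in_Gamma_e.
Qed.

Lemma elementary_sum_deg_in S : elementary adj S ->
  \sum_(r in Gamma adj S) deg_in adj S r = #|Gamma_o adj S| + (#|Gamma_e adj S|).*2.
Proof.
move=> Sel; rewrite sum_Gamma_oe -sum1_card -muln2 -sum_nat_const.
congr (_ + _); apply: eq_bigr => r; rewrite inE => /andP [/Sel].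
  by case: (deg_in adj S r) => [|[|[|d]]].
by case: (deg_in adj S r) => [|[|[|d]]].
Qed.

Lemma induced_edgeE S :
  induced_edge adj S =2 sub_rel (tedge adj) [set x | Gnodes adj S x].
Proof. by move=> x y; rewrite /sub_rel !inE. Qed.

Lemma card_Gnodes S : #|[set x | Gnodes adj S x]| = #|S| + #|Gamma adj S|.
Proof.
by rewrite -!sum1_card big_sumType; congr (_ + _); apply: eq_bigl => x; rewrite inE.
Qed.

Lemma sum_sub_deg_Gnodes S :
  \sum_(x in [set x | Gnodes adj S x]) sub_deg (tedge adj) [set x | Gnodes adj S x] x =
  (\sum_(r in Gamma adj S) deg_in adj S r).*2.
Proof.
rewrite /sub_deg big_sumType -addnn {1}sum_deg_in_Gamma /=.
congr (_ + _); apply: eq_big => x; rewrite in_set // => xG.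
  rewrite (ldeg_nbrs_Gamma xG) /nbrs_in !card_sep_sum big_sumType /= big1 // add0n.
  by apply: eq_bigl => r; rewrite inE.
rewrite card_sep_sum big_sumType /= [X in _ + X]big1 // addn0 /deg_in card_sep_sum.
by apply: eq_bigl => v; rewrite inE.
Qed.

Lemma acyclic_trapping_set_bound dl S a b :
  left_regular adj dl -> 1 < dl -> S != set0 -> trapping_set adj S a b ->
  induced_connected adj S -> ~ has_cycle (induced_edge adj S) ->
  a * (dl - 2) + 2 <= b /\ (elementary adj S -> b = a * (dl - 2) + 2).
Proof.
move=> reg dl2 S0 [<- <-] Scon Sacyc.
set D := \sum_(r in Gamma adj S) deg_in adj S r.
have D_tree : D.*2 = (#|S| + #|Gamma adj S|).-1.*2.
  rewrite -sum_sub_deg_Gnodes -card_Gnodes.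
  apply: (tree_sum_sub_deg tedge_sym tedge_irr) => [x y|cyc].
    by rewrite !inE -(eq_connect (induced_edgeE S)); apply: Scon.
  by apply: Sacyc; apply: has_cycle_subrel cyc => x y; rewrite induced_edgeE.
have D_reg : D = #|S| * dl.
  by rewrite /D sum_deg_in_Gamma (eq_bigr _ (fun v _ => reg v)) sum_nat_const.
have G_oe : #|Gamma adj S| = #|Gamma_o adj S| + #|Gamma_e adj S|.
  by rewrite -!sum1_card sum_Gamma_oe.
have S_gt0 : 0 < #|S| by rewrite card_gt0.
have dl_ge2 : #|S| * 2 <= #|S| * dl by rewrite leq_mul2l dl2 orbT.
have D_ge := sum_deg_in_ge S; rewrite -/D in D_ge.
rewrite mulnBr; split => [|/elementary_sum_deg_in]; rewrite -/D; move: D D_tree D_reg D_ge; lia.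
Qed.
End Tanner.

Theorem lemma6 (L R : finType) (adj : L -> R -> bool) (hG : min_deg2 adj) :
  (* (i) *)
  (forall dl : nat, left_regular adj dl -> 2 <= dl ->
     forall (S : {set L}) (a b : nat),
       S != set0 -> trapping_set adj S a b ->
       induced_connected adj S -> ~ has_cycle (induced_edge adj S) ->
       a * (dl - 2) + 2 <= b /\ (elementary adj S -> b = a * (dl - 2) + 2)) /\
  (* (ii) *)
  (forall p : seq (L + R), is_cycle (tedge adj) p ->
     (forall q, is_cycle (tedge adj) q -> size p <= size q) ->
     elementary adj (var_nodes p)) /\
  (* (iii) *)
  (forall S : {set L}, S != set0 -> in_T adj S -> has_cycle (induced_edge adj S)) /\
  (* (iv) *)
  (forall dl : nat, left_regular adj dl -> 2 <= dl ->
     forall S : {set L}, S != set0 -> absorbing adj S ->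
       has_cycle (induced_edge adj S)) /\
  (* (v) *)
  (forall l : nat, left_regular adj l -> 3 <= l ->
     forall S : {set L}, S != set0 -> ZP_trapping adj l S ->
       has_cycle (induced_edge adj S)).
Proof.
split; first by move=> dl reg dl2 S a b; apply: acyclic_trapping_set_bound.
split; first exact: shortest_cycle_elementary.
split; first by move=> S S0 [_ Sdeg]; apply: even_nbrs_has_cycle.
split; last by move=> l reg l3 S; apply: ZP_trapping_has_cycle.
by move=> dl reg dl2 S S0; apply: absorbing_has_cycle => // v _; rewrite reg.
Qed.
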